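(* Let $\epsilon_1>0$ and $\epsilon_2>0$. For all $r \in \mathbb{R}^3\setminus\{0\}$ and all $f_*\in\mathbb{R}^3$, $$\psi\Big(r, \frac{f_*}{\|r\|^4}\Big) > \|c_1(r,f_* )\|^2 = \big(2 - \operatorname{sgn}(r^{\mathrm T} f_* )^2\big)\,\|c_2(r,f_* )\|^2,$$ where $\psi$, $c_1$, $c_2$ are defined in the context below.
   Context: Notation: $\|\cdot\|$ is the Euclidean norm. For $a=(a_1,a_2,a_3)^{\mathrm T}\in\mathbb{R}^3$, $[a]_\times$ is the skew-symmetric matrix with rows $(0,-a_3,a_2)$, $(a_3,0,-a_1)$, $(-a_2,a_1,0)$, so $[a]_\times b = a\times b$. $\operatorname{sgn}:\mathbb{R}\to\{-1,0,1\}$ is the sign function with $\operatorname{sgn}(0)=0$. Auxiliary scalar: for $r,f_*\in\mathbb{R}^3$, $\Phi_1(r,f_* ) \triangleq \sqrt{\|[r]_\times f_*\|^2 + \|r\|^2\|f_*\|^2}$ and $\Phi_2(r,f_* ) \triangleq \big(2-\operatorname{sgn}(r^{\mathrm T} f_* )^2\big)\Phi_1(r,f_* )$. Function $\psi:\mathbb{R}^3\times\mathbb{R}^3\to\mathbb{R}$ (with the fixed constants $\epsilon_1,\epsilon_2>0$): $$\psi(r,\zeta) \triangleq -\frac{\|r\|^3\, r^{\mathrm T}\zeta}{4}\tanh\Big(\frac{\|r\|^3\, r^{\mathrm T}\zeta}{\epsilon_1}\Big) + \sqrt{\|r\|^6\,\Phi_1(r,\zeta)^2 + \epsilon_2}.$$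 Matrix $R(r,f_* )\in\mathbb{R}^{3\times3}$ (for $r\neq0$): if $[r]_\times f_*\neq0$, its three rows are (the transposes of) $\frac{r}{\|r\|}$, $\frac{(r^{\mathrm T} r) f_* - (r^{\mathrm T} f_* ) r}{\|r\|\,\|[r]_\times f_*\|}$, $\frac{[r]_\times f_*}{\|[r]_\times f_*\|}$; if $[r]_\times f_*=0$, its first row is $r^{\mathrm T}/\|r\|$ and its other two rows are zero. Scalars (evaluated at $(r,f_* )$, $r\ne 0$): $a_x \triangleq -\frac{\operatorname{sgn}(r^{\mathrm T} f_* )}{2}\big(\frac{|r^{\mathrm T} f_*|+\Phi_1}{\|r\|}\big)^{1/2}$, $a_y \triangleq \frac{1}{\sqrt2}\big(\frac{-|r^{\mathrm T} f_*|+\Phi_2}{\|r\|}\big)^{1/2}$, $b_x \triangleq \frac12\big(\frac{|r^{\mathrm T} f_*|+\Phi_2}{\|r\|}\big)^{1/2}$, $b_y \triangleq -\frac{\operatorname{sgn}(r^{\mathrm T} f_* )}{\sqrt2}\big(\frac{-|r^{\mathrm T} f_*|+\Phi_1}{\|r\|}\big)^{1/2}$. With $a(r,f_* )\triangleq(a_x,a_y,0)^{\mathrm T}$ and $b(r,f_* )\triangleq(b_x,b_y,0)^{\mathrm T}$, define $c_1(r,f_* )\triangleq R(r,f_* )^{\mathrm T} a(r,f_* )$ and $c_2(r,f_* )\triangleq R(r,f_* )^{\mathrm T} b(r,f_* )$. *)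

From Stdlib Require Import Reals Lra.
Open Scope R_scope.

Record vec3 := V3 { v1 : R; v2 : R; v3 : R }.

Definition vzero : vec3 := V3 0 0 0.
Definition vadd (a b : vec3) : vec3 := V3 (v1 a + v1 b) (v2 a + v2 b) (v3 a + v3 b).
Definition vscale (k : R) (a : vec3) : vec3 := V3 (k * v1 a) (k * v2 a) (k * v3 a).
Definition dot (a b : vec3) : R := v1 a * v1 b + v2 a * v2 b + v3 a * v3 b.
Definition norm (a : vec3) : R := sqrt (dot a a).

(* [a]_x b : the skew-symmetric matrix of a, rows (0,-a3,a2),(a3,0,-a1),(-a2,a1,0),
   applied to b (i.e. a x b). *)
Definition skew_mul (a b : vec3) : vec3 :=
  V3 (0 * v1 b + - v3 a * v2 b + v2 a * v3 b)
     (v3 a * v1 b + 0 * v2 b + - v1 a * v3 b)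
     (- v2 a * v1 b + v1 a * v2 b + 0 * v3 b).

Definition sgn (x : R) : R :=
  if Rlt_dec 0 x then 1 else if Rlt_dec x 0 then -1 else 0.

Definition tanh (x : R) : R := (exp x - exp (- x)) / (exp x + exp (- x)).

Definition Phi1 (r f : vec3) : R :=
  sqrt (norm (skew_mul r f) ^ 2 + norm r ^ 2 * norm f ^ 2).
Definition Phi2 (r f : vec3) : R := (2 - sgn (dot r f) ^ 2) * Phi1 r f.

Definition psi (eps1 eps2 : R) (r zeta : vec3) : R :=
  - (norm r ^ 3 * dot r zeta) / 4 * tanh (norm r ^ 3 * dot r zeta / eps1)
  + sqrt (norm r ^ 6 * Phi1 r zeta ^ 2 + eps2).

Record mat3 := M3 { row1 : vec3; row2 : vec3; row3 : vec3 }.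
(* M^T v = v1 * row1 + v2 * row2 + v3 * row3 *)
Definition mulT (M : mat3) (v : vec3) : vec3 :=
  vadd (vadd (vscale (v1 v) (row1 M)) (vscale (v2 v) (row2 M))) (vscale (v3 v) (row3 M)).

Definition Rmat (r f : vec3) : mat3 :=
  let w := skew_mul r f in
  if Req_EM_T (norm w) 0 then
    M3 (vscale (/ norm r) r) vzero vzero
  else
    M3 (vscale (/ norm r) r)
       (vscale (/ (norm r * norm w)) (vadd (vscale (dot r r) f) (vscale (- dot r f) r)))
       (vscale (/ norm w) w).

Definition a_x (r f : vec3) : R :=
  - sgn (dot r f) / 2 * sqrt ((Rabs (dot r f) + Phi1 r f) / norm r).
Definition a_y (r f : vec3) : R :=
  / sqrt 2 * sqrt ((- Rabs (dot r f) + Phi2 r f) / norm r).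
Definition b_x (r f : vec3) : R :=
  / 2 * sqrt ((Rabs (dot r f) + Phi2 r f) / norm r).
Definition b_y (r f : vec3) : R :=
  - sgn (dot r f) / sqrt 2 * sqrt ((- Rabs (dot r f) + Phi1 r f) / norm r).

Definition avec (r f : vec3) : vec3 := V3 (a_x r f) (a_y r f) 0.
Definition bvec (r f : vec3) : vec3 := V3 (b_x r f) (b_y r f) 0.

Definition cvec1 (r f : vec3) : vec3 := mulT (Rmat r f) (avec r f).
Definition cvec2 (r f : vec3) : vec3 := mulT (Rmat r f) (bvec r f).

(** With p = r.f, Phi1 as in the statement, n = |r| and t = sgn(p)^2 (so t = 1, or
    t = 0 and p = 0), the frame [Rmat r f] has orthonormal first two rows, so
    |c1|^2 = a_x^2 + a_y^2 and |c2|^2 = b_x^2 + b_y^2 (when r x f = 0 the rows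
    degenerate, but then Phi1 = |p| and a_y = b_y = 0).  Squaring the square roots
    gives |c1|^2 = ((4 - t) Phi1 - |p|) / 4n and |c2|^2 = ((2 + t) Phi1 - |p|) / 4n,
    whence the identity.  For the inequality, scaling f by n^-4 turns the argument
    of psi into p/n, |tanh| <= 1 bounds the first term of psi below by -|p|/4n, and
    the square root is strictly above Phi1/n because eps2 > 0. *)
From Pilot Require Import Defs.
From Stdlib Require Import Reals Lra.
Open Scope R_scope.

Lemma dot_self_ge_0 v : 0 <= dot v v.
Proof. destruct v as [a b c]; unfold dot; simpl; nra. Qed.

Lemma norm_pow2 v : norm v ^ 2 = dot v v.
Proof. unfold norm; apply pow2_sqrt, dot_self_ge_0. Qed.

Lemma norm_ge_0 v : 0 <= norm v.
Proof. apply sqrt_pos. Qed.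

Lemma norm_pos_lt v : v <> vzero -> 0 < norm v.
Proof.
  intros hv; apply sqrt_lt_R0.
  destruct v as [a b c]; unfold dot; simpl.
  destruct (Req_dec a 0), (Req_dec b 0), (Req_dec c 0); try nra.
  subst; contradiction.
Qed.

Lemma dot_vscale a b u v : dot (vscale a u) (vscale b v) = a * b * dot u v.
Proof. destruct u, v; unfold dot, vscale; simpl; ring. Qed.

Lemma dot_vscale_r b u v : dot u (vscale b v) = b * dot u v.
Proof. destruct u, v; unfold dot, vscale; simpl; ring. Qed.

Lemma Lagrange_identity r f :
  dot (skew_mul r f) (skew_mul r f) + dot r f ^ 2 = dot r r * dot f f.
Proof. destruct r, f; unfold dot, skew_mul; simpl; ring. Qed.

Lemma dot_rejection r f :
  dot r (vadd (vscale (dot r r) f) (vscale (- dot r f) r)) = 0.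
Proof. destruct r, f; unfold dot, vadd, vscale; simpl; ring. Qed.

Lemma dot_rejection_self r f :
  dot (vadd (vscale (dot r r) f) (vscale (- dot r f) r))
      (vadd (vscale (dot r r) f) (vscale (- dot r f) r))
  = dot r r * dot (skew_mul r f) (skew_mul r f).
Proof. destruct r, f; unfold dot, vadd, vscale, skew_mul; simpl; ring. Qed.

Lemma dot_self_normalized v : 0 < norm v -> dot (vscale (/ norm v) v) (vscale (/ norm v) v) = 1.
Proof. intros hv; rewrite dot_vscale, <- norm_pow2; field; lra. Qed.

Lemma norm_mulT_pow2 M x y :
  norm (mulT M (V3 x y 0)) ^ 2 =
  x ^ 2 * dot (row1 M) (row1 M) + 2 * x * y * dot (row1 M) (row2 M)
  + y ^ 2 * dot (row2 M) (row2 M).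
Proof.
  rewrite norm_pow2; destruct M as [[] [] []]; unfold mulT, dot, vadd, vscale; simpl; ring.
Qed.

Lemma norm_mulT_Rmat_pow2 r f x y :
  0 < norm r -> (norm (skew_mul r f) = 0 -> y = 0) ->
  norm (mulT (Rmat r f) (V3 x y 0)) ^ 2 = x ^ 2 + y ^ 2.
Proof.
  intros hr hy; rewrite norm_mulT_pow2; unfold Rmat.
  destruct (Req_EM_T (norm (skew_mul r f)) 0) as [w0 | w0]; simpl.
  - rewrite (hy w0), dot_self_normalized by exact hr; ring.
  - assert (hw : 0 < norm (skew_mul r f)) by (pose proof (norm_ge_0 (skew_mul r f)); lra).
    rewrite dot_self_normalized, !dot_vscale, dot_rejection, dot_rejection_self,
      <- !norm_pow2 by exact hr.
    field; lra.
Qed.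

Lemma Phi1_pow2 r f : Phi1 r f ^ 2 = dot (skew_mul r f) (skew_mul r f) + dot r r * dot f f.
Proof.
  unfold Phi1; rewrite !norm_pow2, pow2_sqrt; [reflexivity |].
  pose proof (dot_self_ge_0 (skew_mul r f)); pose proof (dot_self_ge_0 r);
  pose proof (dot_self_ge_0 f); nra.
Qed.

Lemma Phi1_ge_0 r f : 0 <= Phi1 r f.
Proof. apply sqrt_pos. Qed.

Lemma Phi1_vscale_pow2 k r f : Phi1 r (vscale k f) ^ 2 = k ^ 2 * Phi1 r f ^ 2.
Proof. rewrite !Phi1_pow2; destruct r, f; unfold dot, skew_mul, vscale; simpl; ring. Qed.

Lemma Rabs_dot_le_Phi1 r f : Rabs (dot r f) <= Phi1 r f.
Proof.
  pose proof (Phi1_pow2 r f); pose proof (Lagrange_identity r f);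
  pose proof (pow2_abs (dot r f)); pose proof (Rabs_pos (dot r f));
  pose proof (Phi1_ge_0 r f); pose proof (dot_self_ge_0 (skew_mul r f)); nra.
Qed.

Lemma Phi1_eq_Rabs_dot r f : norm (skew_mul r f) = 0 -> Phi1 r f = Rabs (dot r f).
Proof.
  intros w0; apply Rsqr_inj; [apply Phi1_ge_0 | apply Rabs_pos |].
  rewrite !Rsqr_pow2, pow2_abs, Phi1_pow2, <- Lagrange_identity, <- norm_pow2, w0; ring.
Qed.

Lemma sgn_pow2_cases x : sgn x ^ 2 = 1 \/ (sgn x = 0 /\ x = 0).
Proof.
  unfold sgn; destruct (Rlt_dec 0 x); [left; ring |].
  destruct (Rlt_dec x 0); [left; ring | right; split; lra].
Qed.

Lemma sgn_pow2_mul_Rabs x : sgn x ^ 2 * Rabs x = Rabs x.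
Proof. destruct (sgn_pow2_cases x) as [-> | [-> ->]]; rewrite ?Rabs_R0; ring. Qed.

Lemma Rabs_dot_le_Phi2 r f : Rabs (dot r f) <= Phi2 r f.
Proof.
  pose proof (Rabs_dot_le_Phi1 r f); pose proof (Rabs_pos (dot r f)); unfold Phi2.
  destruct (sgn_pow2_cases (dot r f)) as [-> | [-> _]]; lra.
Qed.

Lemma pow2_mul_sqrt c X : 0 <= X -> (c * sqrt X) ^ 2 = c ^ 2 * X.
Proof. intros hX; rewrite Rpow_mult_distr, pow2_sqrt; auto. Qed.

Section Coefficients.

Variables r f : vec3.
Hypothesis hr : 0 < norm r.

Lemma a_x_pow2 : a_x r f ^ 2 = sgn (dot r f) ^ 2 / 4 * ((Rabs (dot r f) + Phi1 r f) / norm r).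
Proof.
  pose proof (Rabs_pos (dot r f)); pose proof (Phi1_ge_0 r f).
  unfold a_x; rewrite pow2_mul_sqrt by (apply Rle_mult_inv_pos; lra); field; lra.
Qed.

Lemma a_y_pow2 : a_y r f ^ 2 = / 2 * ((- Rabs (dot r f) + Phi2 r f) / norm r).
Proof.
  pose proof (Rabs_dot_le_Phi2 r f).
  unfold a_y; rewrite pow2_mul_sqrt by (apply Rle_mult_inv_pos; lra).
  rewrite pow_inv, pow2_sqrt by lra; reflexivity.
Qed.

Lemma b_x_pow2 : b_x r f ^ 2 = / 4 * ((Rabs (dot r f) + Phi2 r f) / norm r).
Proof.
  pose proof (Rabs_pos (dot r f)); pose proof (Rabs_dot_le_Phi2 r f).
  unfold b_x; rewrite pow2_mul_sqrt by (apply Rle_mult_inv_pos; lra); field; lra.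
Qed.

Lemma b_y_pow2 : b_y r f ^ 2 = sgn (dot r f) ^ 2 / 2 * ((- Rabs (dot r f) + Phi1 r f) / norm r).
Proof.
  pose proof (Rabs_dot_le_Phi1 r f); pose proof (sqrt_lt_R0 2 ltac:(lra)).
  unfold b_y; rewrite pow2_mul_sqrt by (apply Rle_mult_inv_pos; lra).
  unfold Rdiv at 1; rewrite Rpow_mult_distr, pow_inv, pow2_sqrt by lra; field; lra.
Qed.

Lemma a_y_degenerate : norm (skew_mul r f) = 0 -> a_y r f = 0.
Proof.
  intros w0; unfold a_y, Phi2; rewrite Phi1_eq_Rabs_dot by exact w0.
  replace (- Rabs (dot r f) + (2 - sgn (dot r f) ^ 2) * Rabs (dot r f)) with 0
    by (pose proof (sgn_pow2_mul_Rabs (dot r f)); lra).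
  unfold Rdiv; rewrite Rmult_0_l, sqrt_0; ring.
Qed.

Lemma b_y_degenerate : norm (skew_mul r f) = 0 -> b_y r f = 0.
Proof.
  intros w0; unfold b_y; rewrite Phi1_eq_Rabs_dot, Rplus_opp_l by exact w0.
  unfold Rdiv; rewrite Rmult_0_l, sqrt_0; ring.
Qed.

Lemma norm_cvec1_pow2 :
  norm (cvec1 r f) ^ 2 = ((4 - sgn (dot r f) ^ 2) * Phi1 r f - Rabs (dot r f)) / (4 * norm r).
Proof.
  unfold cvec1, avec; rewrite norm_mulT_Rmat_pow2 by (auto using a_y_degenerate).
  rewrite a_x_pow2, a_y_pow2; unfold Phi2.
  destruct (sgn_pow2_cases (dot r f)) as [-> | [-> ->]]; rewrite ?Rabs_R0; field; lra.
Qed.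

Lemma norm_cvec2_pow2 :
  norm (cvec2 r f) ^ 2 = ((2 + sgn (dot r f) ^ 2) * Phi1 r f - Rabs (dot r f)) / (4 * norm r).
Proof.
  unfold cvec2, bvec; rewrite norm_mulT_Rmat_pow2 by (auto using b_y_degenerate).
  rewrite b_x_pow2, b_y_pow2; unfold Phi2.
  destruct (sgn_pow2_cases (dot r f)) as [-> | [-> ->]]; rewrite ?Rabs_R0; field; lra.
Qed.

End Coefficients.

Lemma Rabs_tanh_le_1 x : Rabs (Defs.tanh x) <= 1.
Proof.
  unfold Defs.tanh; pose proof (exp_pos x); pose proof (exp_pos (- x)).
  apply Rabs_le; split; apply Rmult_le_reg_r with (exp x + exp (- x)); try lra;
    unfold Rdiv; rewrite Rmult_assoc, Rinv_l; lra.
Qed.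

Lemma mul_tanh_le_Rabs x y : x * Defs.tanh y <= Rabs x.
Proof.
  apply Rle_trans with (Rabs (x * Defs.tanh y)); [apply Rle_abs |].
  rewrite Rabs_mult; pose proof (Rabs_tanh_le_1 y); pose proof (Rabs_pos x); nra.
Qed.

Lemma lt_sqrt_pow2_plus q e : 0 <= q -> 0 < e -> q < sqrt (q ^ 2 + e).
Proof.
  intros hq he; rewrite <- (sqrt_pow2 q) at 1 by exact hq.
  apply sqrt_lt_1_alt; pose proof (pow2_ge_0 q); lra.
Qed.

Lemma psi_scaled_gt eps1 eps2 r f : 0 < eps2 -> 0 < norm r ->
  (4 * Phi1 r f - Rabs (dot r f)) / (4 * norm r) < psi eps1 eps2 r (vscale (/ norm r ^ 4) f).
Proof.
  intros he hr; unfold psi.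
  replace (norm r ^ 3 * dot r (vscale (/ norm r ^ 4) f)) with (dot r f / norm r)
    by (rewrite dot_vscale_r; field; lra).
  replace (norm r ^ 6 * Phi1 r (vscale (/ norm r ^ 4) f) ^ 2) with ((Phi1 r f / norm r) ^ 2)
    by (rewrite Phi1_vscale_pow2; field; lra).
  pose proof (mul_tanh_le_Rabs (dot r f / norm r) (dot r f / norm r / eps1)).
  pose proof (lt_sqrt_pow2_plus (Phi1 r f / norm r) eps2
                (Rle_mult_inv_pos _ _ (Phi1_ge_0 r f) hr) he).
  unfold Rdiv in *; rewrite Rabs_mult, Rabs_inv, (Rabs_pos_eq (norm r)) in * by lra.
  rewrite Rinv_mult; lra.
Qed.

Theorem proposition4 (eps1 eps2 : R) (h1 : 0 < eps1) (h2 : 0 < eps2)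
  (r fs : vec3) (hr : r <> vzero) :
  psi eps1 eps2 r (vscale (/ norm r ^ 4) fs) > norm (cvec1 r fs) ^ 2 /\
  norm (cvec1 r fs) ^ 2 = (2 - sgn (dot r fs) ^ 2) * norm (cvec2 r fs) ^ 2.
Proof.
  pose proof (norm_pos_lt r hr) as hn.
  rewrite norm_cvec1_pow2, norm_cvec2_pow2 by exact hn.
  split.
  - eapply Rle_lt_trans; [| apply psi_scaled_gt; assumption].
    unfold Rdiv; apply Rmult_le_compat_r; [apply Rlt_le, Rinv_0_lt_compat; lra |].
    pose proof (Phi1_ge_0 r fs).
    destruct (sgn_pow2_cases (dot r fs)) as [-> | [-> _]]; lra.
  - destruct (sgn_pow2_cases (dot r fs)) as [-> | [-> ->]]; rewrite ?Rabs_R0; field; lra.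
Qed.
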